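(* Let $\mathcal C$ be a finite commutative semigroup. Then $\mathsf D(\mathcal C)=\mathsf d(\mathcal C)+1\le|\mathcal C|$.
   Context: All semigroups are commutative, written additively, and have an identity element $0$; an empty sum equals $0$. For such $\mathcal C$, $\mathsf d(\mathcal C)$ is the smallest $d\in\mathbb N_0\cup\{\infty\}$ such that for all $n\in\mathbb N$ and $c_1,\dots,c_n\in\mathcal C$ there is $\Omega\subset[1,n]$ with $|\Omega|\le d$ and $\sum_{\nu=1}^n c_\nu=\sum_{\nu\in\Omega}c_\nu$. $\mathsf D(\mathcal C)$ is the smallest $\ell\in\mathbb N\cup\{\infty\}$ such that for all $n\ge\ell$ and $c_1,\dots,c_n\in\mathcal C$ there is a proper subset $\Omega\subsetneq[1,n]$ with $\sum_{\nu=1}^n c_\nu=\sum_{\nu\in\Omega}c_\nu$. *)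

(* A commutative semigroup with identity 0, written additively,
   is an nmodType; finite ones are finNmodType. *)
From HB Require Import structures.
From mathcomp Require Import all_boot all_order all_algebra.
Set Implicit Arguments. Unset Strict Implicit. Unset Printing Implicit Defensive.
Import GRing.Theory.
Local Open Scope ring_scope.

Definition small_d_prop (C : nmodType) (d : nat) : Prop :=
  forall (n : nat) (c : 'I_n -> C), (0 < n)%N ->
    exists Om : {set 'I_n}, (#|Om| <= d)%N /\
      \sum_(i < n) c i = \sum_(i in Om) c i.

Definition is_small_d (C : nmodType) (d : nat) : Prop :=
  small_d_prop C d /\ forall d', small_d_prop C d' -> (d <= d')%N.

Definition large_D_prop (C : nmodType) (l : nat) : Prop :=
  forall (n : nat), (l <= n)%N -> forall (c : 'I_n -> C),
    exists Om : {set 'I_n}, Om \proper [set: 'I_n] /\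
      \sum_(i < n) c i = \sum_(i in Om) c i.

Definition is_large_D (C : nmodType) (l : nat) : Prop :=
  (0 < l)%N /\ large_D_prop C l /\
  forall l', (0 < l')%N -> large_D_prop C l' -> (l <= l')%N.

(* A sum c_1 + ... + c_n that cannot be shortened by dropping terms has all its
   prefix sums distinct (otherwise the block between two equal prefix sums could
   be dropped), so n <= |C| - 1. Conversely, a sum that cannot be shortened by
   dropping terms stays unshortenable when restricted to the terms of a shortest
   equivalent subsum; hence "every sum of length >= l can be shortened" is the
   same as "every sum equals a subsum of length <= l - 1", i.e. D = d + 1. *)
From HB Require Import structures.
From mathcomp Require Import all_boot all_order all_algebra.
From mathcomp Require Import zify.
From Stdlib Require Import Classical Wf_nat.

Local Open Scope ring_scope.

Lemma large_D_prop_small_d (C : nmodType) (d : nat) :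
  small_d_prop C d -> large_D_prop C d.+1.
Proof.
move=> sd n dn c; have [Om [cardOm sumOm]] := sd n c (leq_ltn_trans (leq0n d) dn).
exists Om; split=> //; rewrite properT; apply: contraTneq cardOm => ->.
by rewrite cardsT card_ord -ltnNge.
Qed.

Lemma small_d_large_D (C : nmodType) (l : nat) :
  large_D_prop C l -> small_d_prop C l.-1.
Proof.
move=> lD n c _.
pose sums_to_total (O : {set 'I_n}) := \sum_(i < n) c i == \sum_(i in O) c i.
have sumT : sums_to_total setT by apply/eqP/eq_bigl => i; rewrite in_setT.
have [O /eqP sumO minO] := arg_minnP (fun O : {set 'I_n} => #|O|) sumT.
exists O; split=> //; suff: ~~ (l <= #|O|)%N by lia.
apply/negP => /lD /(_ (fun j => c (enum_val j))) [Om [properOm sumOm]].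
(* Shortening the sum of the terms indexed by O shortens the whole sum. *)
have sumO' : sums_to_total (enum_val @: Om).
  rewrite /sums_to_total big_imset /=; last by move=> x y _ _; apply: enum_val_inj.
  by rewrite -sumOm -big_enum_val sumO.
have := minO _ sumO'; rewrite card_imset; last exact: enum_val_inj.
have := proper_card properOm; rewrite cardsT card_ord.
by move=> lt le; have := leq_trans lt le; rewrite ltnn.
Qed.

Lemma large_D_prop_card (C : finNmodType) : large_D_prop C #|C|.
Proof.
move=> m Cm c.
pose prefix (k : 'I_m.+1) := \sum_(i < m | (i < k)%N) c i.
have [i [j [ltij prefix_ij]]] : exists i j : 'I_m.+1, (i < j)%N /\ prefix i = prefix j.
  have /injectivePn [i [j neqij prefix_ij]] : ~~ injectiveb prefix.
    by apply/injectiveP => /leq_card; rewrite card_ord => /leq_trans/(_ Cm); rewrite ltnn.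
  case: (ltngtP i j) => [ltij|ltji|/val_inj eqij]; last by rewrite eqij eqxx in neqij.
  - by exists i, j.
  - by exists j, i.
(* Equal prefix sums at i < j: the terms with index in [i, j) can be dropped. *)
exists [set x : 'I_m | (x < i)%N || (j <= x)%N]; split.
  have ltim : (i < m)%N by have := ltn_ord j; lia.
  rewrite properT; apply/negP => /eqP fullO.
  have : Ordinal ltim \in [set x : 'I_m | (x < i)%N || (j <= x)%N] by rewrite fullO inE.
  by rewrite inE /=; lia.
rewrite (bigID (fun x : 'I_m => (x < j)%N)) [RHS](bigID (fun x : 'I_m => (x < j)%N)) /=.
congr (_ + _); last by apply: eq_bigl => x; rewrite inE; lia.
rewrite -/(prefix j) -prefix_ij; apply: eq_bigl => x; rewrite inE; lia.
Qed.

Lemma ex_least_nat (P : nat -> Prop) (n : nat) :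
  P n -> exists d, P d /\ forall d', P d' -> (d <= d')%N.
Proof.
move=> Pn; have [d [[Pd leastd] _]] :=
  dec_inh_nat_subset_has_unique_least_element P (fun k => classic (P k)) (ex_intro P n Pn).
by exists d; split=> // d' /leastd /leP.
Qed.

Theorem lemma5p10 (C : finNmodType) :
  exists d : nat, is_small_d C d /\ is_large_D C d.+1 /\ (d.+1 <= #|C|)%N.
Proof.
have card_gt0 : (0 < #|C|)%N by apply/card_gt0P; exists 0.
have sd_card : small_d_prop C #|C|.-1 by apply/small_d_large_D/large_D_prop_card.
have [d [sd leastd]] := @ex_least_nat (small_d_prop C) _ sd_card.
exists d; split; first by [].
split; last by have := leastd _ sd_card; lia.
split=> //; split; first exact: large_D_prop_small_d.
by move=> l l_gt0 /small_d_large_D /leastd; lia.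
Qed.
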